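(* Let $A$ be a basic connected finite dimensional algebra over an algebraically closed field $k$ with ordinary quiver $Q$ without oriented cycles, and let $D\subseteq\mathsf{HH}^1(A)$. Then $D$ is diagonalizable if and only if there exists a presentation $\nu\colon kQ\twoheadrightarrow A$ such that $D\subseteq\mathsf{Im}(\theta_\nu)$.
   Context: Fix a complete set $e_1,\dots,e_n$ of primitive orthogonal idempotents of $A$ indexed by $Q_0=\{1,\dots,n\}$, $E=\bigoplus ke_i$, $\mathfrak r$ the radical. A presentation is a surjective algebra map $\nu\colon kQ\twoheadrightarrow A$ with admissible kernel ($(kQ^+)^N\subseteq\mathsf{Ker}\,\nu\subseteq(kQ^+)^2$ for some $N\ge2$, $kQ^+$ the arrow ideal) and $\nu(e_i)=e_i$. $\mathsf{HH}^1(A)=Der_0(A)/Int_0(A)$, with $Der_0(A)$ the derivations vanishing on all $e_i$ (commutator bracket) and $Int_0(A)=\{a\mapsto ea-ae\mid e\in E\}$. A basis of $A$ is a $k$-basis $\mathcal B\subseteq\bigcup_{i,j}e_jAe_i$ containing $e_1,\dots,e_n$ with its other elements in $\mathfrak r$; a subset $D\subseteq\mathsf{HH}^1(A)$ is diagonalizable if there is a basis $\mathcal B$ such that every $f\in D$ is represented by a derivation diagonal in $\mathcal B$. Walks: paths in $Q$ with formal inverse arrows allowed. For $I=\mathsf{Ker}\,\nu$, $\sim_I$ is the smallest equivalence relation on walks with $\alpha\alpha^{-1}\sim_I e_y$, $\alpha^{-1}\alpha\sim_I e_x$ for arrows $\alpha\colon x\to y$, compatible with concatenation, and identifying two paths occurring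 with nonzero coefficient in a same minimal relation of $I$ (a nonzero $\sum t_iu_i\in I$, $t_i\neq0$, distinct paths, no nonempty proper subsum in $I$). $\pi_1(Q,I)$ is the group of classes of closed walks at a fixed vertex $x_0$. Fix a maximal tree $T$ of $Q$, $\gamma_x$ the minimal walk in $T$ from $x_0$ to $x$. For a group homomorphism $f\colon\pi_1(Q,I)\to k^+$, $\theta_\nu(f)$ is the class of the derivation $\tilde f$ with $\tilde f(\nu(u))=f([\gamma_y^{-1}u\gamma_x]_I)\nu(u)$ for paths $u$ from $x$ to $y$. *)

From HB Require Import structures.
From mathcomp Require Import all_boot all_order all_algebra falgebra.
Set Implicit Arguments. Unset Strict Implicit. Unset Printing Implicit Defensive.
Import GRing.Theory.
Local Open Scope ring_scope.

(* A letter (a, true) traverses a from src a to tgt a; (a, false)      *)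
(* traverses the formal inverse a^-1 from tgt a to src a.              *)
(* A walk is (start vertex, letters in traversal order).               *)
(* A path is (start vertex, arrows in traversal order).                *)
Section Quiver.
Variables (n : nat) (Arr : finType) (src tgt : Arr -> 'I_n).

Definition walk := ('I_n * seq (Arr * bool))%type.
Definition qpath := ('I_n * seq Arr)%type.

Definition letter_src (l : Arr * bool) : 'I_n := if l.2 then src l.1 else tgt l.1.
Definition letter_tgt (l : Arr * bool) : 'I_n := if l.2 then tgt l.1 else src l.1.

Fixpoint letters_ok (x : 'I_n) (s : seq (Arr * bool)) : bool :=
  if s is l :: s' then (letter_src l == x) && letters_ok (letter_tgt l) s' else true.

Definition walk_ok (w : walk) : bool := letters_ok w.1 w.2.
Definition wend (w : walk) : 'I_n := last w.1 (map letter_tgt w.2).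

(* concatenation: first w1, then w2 (in the paper's functional notation
   this is the walk  w2 w1 ) *)
Definition wcat (w1 w2 : walk) : walk := (w1.1, w1.2 ++ w2.2).
Definition winv (w : walk) : walk :=
  (wend w, rev (map (fun l => (l.1, ~~ l.2)) w.2)).
Definition wtriv (x : 'I_n) : walk := (x, [::]).

Definition path_walk (p : qpath) : walk := (p.1, map (fun a => (a, true)) p.2).
Definition path_ok (p : qpath) : bool := walk_ok (path_walk p).
Definition path_end (p : qpath) : 'I_n := wend (path_walk p).

Definition acyclic_quiver : Prop :=
  forall p : qpath, path_ok p -> p.2 != [::] -> path_end p != p.1.

Definition in_arrows (T : {set Arr}) (w : walk) : bool := all (fun l => l.1 \in T) w.2.

Fixpoint reduced_letters (s : seq (Arr * bool)) : bool :=
  match s with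
  | l1 :: ((l2 :: _) as s') =>
      ~~ ((l1.1 == l2.1) && (l1.2 != l2.2)) && reduced_letters s'
  | _ => true
  end.

Definition is_tree (T : {set Arr}) : Prop :=
  forall w : walk, walk_ok w -> in_arrows T w -> w.2 != [::] ->
    reduced_letters w.2 -> wend w = w.1 -> False.

Definition is_max_tree (T : {set Arr}) : Prop :=
  is_tree T /\ forall a, a \notin T -> ~ is_tree (a |: T).

Definition gamma_spec (T : {set Arr}) (x0 : 'I_n) (gamma : 'I_n -> walk) : Prop :=
  forall x, [/\ walk_ok (gamma x), (gamma x).1 = x0, wend (gamma x) = x,
     in_arrows T (gamma x) &
     forall w : walk, walk_ok w -> w.1 = x0 -> wend w = x -> in_arrows T w ->
       (size (gamma x).2 <= size w.2)%N].

End Quiver.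

Section Algebra.
Variables (k : fieldType) (A : falgType k).

(* Jacobson radical: a \in r  iff  1 - x a is left invertible for all x *)
Definition in_rad (a : A) : Prop := forall x : A, exists y : A, y * (1 - x * a) = 1.

Definition in_rad2 (a : A) : Prop :=
  exists s : seq (A * A), (forall p, p \in s -> in_rad p.1 /\ in_rad p.2) /\
    a = \sum_(p <- s) p.1 * p.2.

Definition primitive_idem (x : A) : Prop :=
  x != 0 /\ forall f g : A, f * f = f -> g * g = g -> f * g = 0 -> g * f = 0 ->
    f + g = x -> f = 0 \/ g = 0.

Variables (n : nat) (e : 'I_n -> A).

Definition complete_prim_orth : Prop :=
  [/\ forall i, e i * e i = e i,
      forall i j, i != j -> e i * e j = 0,
      \sum_i e i = 1 &
      forall i, primitive_idem (e i)].

(* basic: e_i A and e_j A are non-isomorphic for i <> j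
   (an isomorphism e_i A -> e_j A is left multiplication by some
    x in e_j A e_i with inverse given by some y in e_i A e_j) *)
Definition basic_alg : Prop :=
  forall i j, i != j -> ~ exists x y : A,
    [/\ x = e j * x * e i, y = e i * y * e j, y * x = e i & x * y = e j].

Definition connected_alg : Prop :=
  forall c : A, c * c = c -> (forall a : A, c * a = a * c) -> c = 0 \/ c = 1.

Variables (Arr : finType) (src tgt : Arr -> 'I_n).

(* Q is the ordinary quiver of A (w.r.t. e): the number of arrows i -> j
   equals dim e_j (r/r^2) e_i; X is a family of elements of e_j r e_i whose
   classes form a basis of e_j (r/r^2) e_i. *)
Definition is_ordinary_quiver : Prop :=
  forall i j : 'I_n, exists X : seq A,
    [/\ size X = #|[set a | (src a == i) && (tgt a == j)]|,
        forall x, x \in X -> in_rad x /\ x = e j * x * e i,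
        forall a, in_rad a -> a = e j * a * e i ->
          exists c : nat -> k, in_rad2 (a - \sum_(t < size X) c t *: X`_t) &
        forall c : nat -> k, in_rad2 (\sum_(t < size X) c t *: X`_t) ->
          forall t, (t < size X)%N -> c t = 0].

(* An algebra map nu : kQ -> A with nu(e_i) = e_i is given by the images
   nu a in e_{tgt a} A e_{src a} of the arrows; nu of a path from x
   a_1 ... a_m (traversal order) is  nu a_m * ... * nu a_1 * e_x. *)
Definition nu_path (nu : Arr -> A) (p : qpath n Arr) : A :=
  foldl (fun acc a => nu a * acc) (e p.1) p.2.

(* image of the element  \sum_(p <- s) c p * p  of kQ *)
Definition nu_sum (nu : Arr -> A) (s : seq (qpath n Arr)) (c : qpath n Arr -> k) : A :=
  \sum_(p <- s) c p *: nu_path nu p.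

Definition is_presentation (nu : Arr -> A) : Prop :=
  [/\ forall a, nu a = e (tgt a) * nu a * e (src a),
      forall a : A, exists s c, all (path_ok src tgt) s /\ a = nu_sum nu s c,
      exists N, (2 <= N)%N /\ forall p, path_ok src tgt p -> (N <= size p.2)%N ->
                                   nu_path nu p = 0 &
      (* Ker nu \subseteq (kQ^+)^2 *)
      forall s c, uniq s -> all (path_ok src tgt) s -> nu_sum nu s c = 0 ->
        forall p, p \in s -> (size p.2 <= 1)%N -> c p = 0].

Definition minimal_relation (nu : Arr -> A) (s : seq (qpath n Arr)) (t : qpath n Arr -> k) : Prop :=
  [/\ uniq s && all (path_ok src tgt) s, s != [::],
      forall p, p \in s -> t p != 0,
      nu_sum nu s t = 0 &
      forall m : bitseq, mask m s != [::] -> (size (mask m s) < size s)%N ->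
        nu_sum nu (mask m s) t != 0].

Inductive walk_rel (nu : Arr -> A) : walk n Arr -> walk n Arr -> Prop :=
  | wr_refl w : walk_rel nu w w
  | wr_sym w w' : walk_rel nu w w' -> walk_rel nu w' w
  | wr_trans w1 w2 w3 : walk_rel nu w1 w2 -> walk_rel nu w2 w3 -> walk_rel nu w1 w3
  | wr_cancel (a : Arr) (b : bool) :
      walk_rel nu (letter_src src tgt (a, b), [:: (a, b); (a, ~~ b)])
                  (wtriv Arr (letter_src src tgt (a, b)))
  | wr_ctx (x : 'I_n) pre (w w' : walk n Arr) post :
      walk_rel nu w w' ->
      walk_ok src tgt (x, pre ++ w.2 ++ post) -> walk_ok src tgt (x, pre ++ w'.2 ++ post) ->
      wend src tgt (x, pre) = w.1 -> wend src tgt (x, pre) = w'.1 ->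
      walk_rel nu (x, pre ++ w.2 ++ post) (x, pre ++ w'.2 ++ post)
  | wr_minrel s t u v :
      minimal_relation nu s t -> u \in s -> v \in s ->
      walk_rel nu (path_walk u) (path_walk v).

Definition closed_at (x0 : 'I_n) (w : walk n Arr) : bool :=
  [&& walk_ok src tgt w, w.1 == x0 & wend src tgt w == x0].

(* group homomorphisms pi_1(Q, Ker nu) -> k^+ (pi_1 taken at x0), given
   as functions on closed walks at x0, constant on ~_I-classes and
   sending concatenation to addition. *)
Definition pi1_hom (nu : Arr -> A) (x0 : 'I_n) (f : walk n Arr -> k) : Prop :=
  (forall w w', closed_at x0 w -> closed_at x0 w' -> walk_rel nu w w' -> f w = f w') /\
  (forall w1 w2, closed_at x0 w1 -> closed_at x0 w2 -> f (wcat w1 w2) = f w1 + f w2).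

Definition der0 (d : A -> A) : Prop :=
  [/\ forall (c : k) (a b : A), d (c *: a + b) = c *: d a + d b,
      forall a b : A, d (a * b) = d a * b + a * d b &
      forall i, d (e i) = 0].

Definition int0 (d : A -> A) : Prop :=
  exists c : 'I_n -> k, let E := \sum_i c i *: e i in forall a, d a = E * a - a * E.

Definition hh1_eq (d d' : A -> A) : Prop := int0 (fun a => d a - d' a).

Definition adapted_basis (B : seq A) : Prop :=
  [/\ basis_of fullv B,
      forall b, b \in B -> exists i j, b = e j * b * e i,
      forall i, e i \in B &
      forall b, b \in B -> (forall i, b != e i) -> in_rad b].

Definition diagonal_in (B : seq A) (d : A -> A) : Prop :=
  forall b, b \in B -> exists c : k, d b = c *: b.

(* D \subseteq HH^1(A) is given by a set of representatives in Der_0(A) *)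
Definition diagonalizable_HH1 (D : (A -> A) -> Prop) : Prop :=
  exists B, adapted_basis B /\
    forall d, D d -> exists d', [/\ der0 d', diagonal_in B d' & hh1_eq d d'].

Definition in_im_theta (nu : Arr -> A) (x0 : 'I_n) (gamma : 'I_n -> walk n Arr)
    (d : A -> A) : Prop :=
  exists f : walk n Arr -> k, pi1_hom nu x0 f /\
  exists d' : A -> A, [/\ der0 d',
    forall u : qpath n Arr, path_ok src tgt u ->
      d' (nu_path nu u) =
      f (wcat (wcat (gamma u.1) (path_walk u)) (winv src tgt (gamma (path_end src tgt u))))
        *: nu_path nu u &
    hh1_eq d d'].

End Algebra.

(** Fix a basis B adapted to e.  The span R of its non-idempotent elements is the radical
    of A; it is closed under products, hence nilpotent by Nakayama's lemma.  In each block
    e_j R e_i choose elements of B forming a basis modulo R^2: by the definition of the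
    ordinary quiver there are as many as arrows i -> j, and sending the arrows onto them
    defines a presentation nu (paths span A because R is spanned by arrows modulo R^2 and
    R is nilpotent).  If a derivation d is diagonal in B, each arrow a is an eigenvector,
    with eigenvalue lam a say, so each path u is one with eigenvalue the sum of lam along u.
    Summing +-lam along walks gives a map f that is additive, vanishes on a a^-1 and is
    constant on every minimal relation, since the part of a minimal relation belonging to
    one eigenvalue is again a relation; so f is a homomorphism on pi_1(Q, Ker nu), and
    theta_nu(f) is the class of d plus the inner derivation of sum_i -f(gamma_i) e_i.
    Conversely, for a presentation nu, extend e_1, ..., e_n by images of paths to a basis
    of A: a non-trivial path u lies in the radical since x nu(u) is a combination of paths
    of positive length, hence nilpotent, and the derivations representing Im theta_nu act
    diagonally on it. *)

From HB Require Import structures.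
From mathcomp Require Import all_boot all_order all_algebra falgebra zify ring.
Set Implicit Arguments. Unset Strict Implicit. Unset Printing Implicit Defensive.
Import GRing.Theory.
Local Open Scope ring_scope.

Section Radical.
Variables (k : fieldType) (A : falgType k).
Implicit Types (a b u v w x y z : A).

Lemma linv_one_subC u v w : w * (1 - u * v) = 1 -> (1 + v * w * u) * (1 - v * u) = 1.
Proof.
move=> wuv; have wuvE : w * (u * v) = w - 1.
  by move: wuv; rewrite mulrBr mulr1 => <-; rewrite opprB addrC subrK.
have vwuvu : v * w * u * (v * u) = v * w * u - v * u.
  have -> : v * w * u * (v * u) = v * (w * (u * v)) * u by rewrite !mulrA.
  by rewrite wuvE mulrBr mulr1 mulrBl.
rewrite mulrDl mul1r mulrBr mulr1 vwuvu.
by rewrite opprB [v * w * u + _]addrCA subrr addr0 subrK.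
Qed.

Lemma in_rad0 : in_rad (0 : A).
Proof. by move=> x; exists 1; rewrite mulr0 subr0 mulr1. Qed.

Lemma in_radD a b : in_rad a -> in_rad b -> in_rad (a + b).
Proof.
move=> ra rb x; have [u ua] := ra x; have [v vb] := rb (u * x).
exists (v * u); rewrite [x * _]mulrDr opprD addrA -mulrA mulrBr ua mulrA; exact: vb.
Qed.

Lemma in_radMl x a : in_rad a -> in_rad (x * a).
Proof. by move=> ra y; have [u ua] := ra (y * x); exists u; rewrite mulrA. Qed.

Lemma in_radMr a x : in_rad a -> in_rad (a * x).
Proof.
move=> ra y; have [w wa] := ra (x * y); rewrite -mulrA in wa.
by exists (1 + y * a * w * x); rewrite mulrA; apply: linv_one_subC.
Qed.

Lemma in_radZ (c : k) a : in_rad a -> in_rad (c *: a).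
Proof. by move=> ra; rewrite -[a]mulr1 scalerAr; apply: in_radMr. Qed.

Lemma in_radN a : in_rad a -> in_rad (- a).
Proof. by rewrite -scaleN1r; apply: in_radZ. Qed.

Lemma in_rad_idem a : a * a = a -> in_rad a -> a = 0.
Proof.
move=> aa ra; have [y ya] := ra 1; rewrite mul1r in ya.
by rewrite -[a]mul1r -ya -mulrA mulrBl mul1r aa subrr mulr0.
Qed.

Lemma in_rad2_0 : in_rad2 (0 : A).
Proof. by exists [::]; rewrite big_nil. Qed.

Lemma in_rad2D a b : in_rad2 a -> in_rad2 b -> in_rad2 (a + b).
Proof.
move=> [s [rs ->]] [t [rt ->]]; exists (s ++ t); rewrite big_cat; split=> // p.
by rewrite mem_cat => /orP[/rs | /rt].
Qed.

Lemma in_rad2Z (c : k) a : in_rad2 a -> in_rad2 (c *: a).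
Proof.
move=> [s [rs ->]]; exists [seq (c *: p.1, p.2) | p <- s]; split.
  by move=> p /mapP[q /rs[r1 r2] ->]; split=> //; apply: in_radZ.
by rewrite big_map scaler_sumr; apply: eq_bigr => p _; rewrite scalerAl.
Qed.

Lemma in_rad2M a b : in_rad a -> in_rad b -> in_rad2 (a * b).
Proof. by move=> ra rb; exists [:: (a, b)]; rewrite big_seq1; split=> // p /[!inE] /eqP->. Qed.

Lemma nilpotent_linv_one_sub z N : z ^+ N = 0 -> exists y, y * (1 - z) = 1.
Proof.
move=> zN; exists (\sum_(i < N) z ^+ i).
suff -> : (\sum_(i < N) z ^+ i) * (1 - z) = 1 - z ^+ N by rewrite zN subr0.
elim: N {zN} => [|m IHm]; first by rewrite big_ord0 mul0r expr0 subrr.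
by rewrite big_ord_recr mulrDl IHm mulrBr mulr1 -exprSr addrA subrK.
Qed.

Lemma nakayama K (m : 'I_K -> A) (c : 'I_K -> 'I_K -> A) :
  (forall i j, in_rad (c i j)) -> (forall i, m i = \sum_j c i j * m j) ->
  forall i, m i = 0.
Proof.
elim: K m c => [|K IHK] m c rc mc; first by case.
pose l := @ord_max K; pose w := widen_ord (leqnSn K).
have [u ul] := rc l l 1; rewrite mul1r in ul.
have ml : m l = u * \sum_(j < K) c l (w j) * m (w j).
  rewrite -[m l]mul1r -ul -mulrA mulrBl mul1r {1}(mc l) big_ord_recr /=.
  by rewrite addrK.
have mw : forall j, m (w j) = 0.
  apply: (IHK _ (fun i j => c (w i) (w j) + c (w i) l * u * c l (w j))).
    by move=> i j; apply: in_radD => //; do 2![apply: in_radMr].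
  move=> i; rewrite {1}(mc (w i)) big_ord_recr /= ml mulr_sumr mulr_sumr.
  by rewrite -big_split; apply: eq_bigr => j _; rewrite mulrDl !mulrA.
move=> i; case: (unliftP l i) => [j ->|->].
  have -> : lift l j = w j by apply: val_inj; rewrite /= /bump leqNgt ltn_ord.
  exact: mw.
by rewrite ml big1 ?mulr0 // => j _; rewrite mw mulr0.
Qed.

End Radical.

Section SpanLemmas.
Variables (k : fieldType) (vT : vectType k).
Implicit Types (X Y : seq vT) (W : {vspace vT}).

Lemma span_ind (P : vT -> Prop) X :
  P 0 -> (forall (c : k) u v, P u -> P v -> P (c *: u + v)) ->
  (forall x, x \in X -> P x) -> forall v, v \in <<X>>%VS -> P v.
Proof.
move=> P0 PC PX v Xv; rewrite (@coord_span _ _ _ (in_tuple X) v Xv).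
apply: big_rec => // i x _ Px.
by apply: PC => //; apply/PX/mem_nth.
Qed.

Lemma extend_free_basis (good : vT -> Prop) :
  (forall v, exists2 X, (forall x, x \in X -> good x) & v \in <<X>>%VS) ->
  forall X0, free X0 -> (forall x, x \in X0 -> good x) ->
  exists2 X, basis_of fullv X & (forall x, x \in X -> good x) /\ {subset X0 <= X}.
Proof.
move=> span_good X0; move: {2}(\dim {:vT} - size X0)%N (leqnn (\dim {:vT} - size X0)%N).
move=> m; elim: m X0 => [|m IHm] X0 X0m freeX0 goodX0.
  exists X0; last by split.
  by apply/andP; split=> //; rewrite eqEdim subvf (eqP freeX0) /=; lia.
have [fullX0 | fullX0] := eqVneq <<X0>>%VS fullv.
  by exists X0; [apply/andP; split=> //; apply/eqP | split].
have [x goodx X0x] : exists2 x, good x & x \notin <<X0>>%VS.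
  have /subvPn[v _ X0v] : ~~ (fullv <= <<X0>>)%VS.
    by apply: contraNN fullX0 => fX0; rewrite eqEsubv fX0 subvf.
  have [X goodX Xv] := span_good v.
  have /hasP[x Xx xX0] : has (fun x => x \notin <<X0>>%VS) X.
    apply: contraNT X0v => /hasPn X0X; apply: subvP Xv.
    by apply/span_subvP => x /X0X; rewrite negbK.
  by exists x => //; apply: goodX.
have freexX0 : free (x :: X0) by rewrite free_cons X0x.
have sizexX0 : (\dim {:vT} - size (x :: X0) <= m)%N.
  have : (size (x :: X0) <= \dim {:vT})%N by rewrite -(eqP freexX0) dimvS ?subvf.
  by move: X0m => /=; lia.
have goodxX0 : forall y, y \in x :: X0 -> good y.
  by move=> y /[!inE] /orP[/eqP-> | /goodX0].
have [X basisX [goodX X0X]] := IHm (x :: X0) sizexX0 freexX0 goodxX0.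
by exists X => //; split=> // y X0y; apply: X0X; rewrite inE X0y orbT.
Qed.

Definition lincomb X (c : nat -> k) : vT := \sum_(t < size X) c t *: X`_t.

Definition free_mod X W : Prop :=
  forall c : nat -> k, lincomb X c \in W -> forall t, (t < size X)%N -> c t = 0.

Lemma lincomb_span X c : lincomb X c \in <<X>>%VS.
Proof. by apply: memv_suml => t _; apply/memvZ/memv_span/mem_nth. Qed.

Lemma lincomb_ord X (c : 'I_(size X) -> k) :
  lincomb X (fun t => oapp c 0 (insub t)) = \sum_(t < size X) c t *: X`_t.
Proof. by apply: eq_bigr => t _; rewrite valK. Qed.

Lemma free_mod_cap X W : free_mod X W -> free X /\ (<<X>> :&: W = 0)%VS.
Proof.
move=> freeXW; split.
  apply/(@freeP _ _ _ (in_tuple X)) => c cX0 t.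
  have := freeXW (fun t => oapp c 0 (insub t)); rewrite lincomb_ord cX0 mem0v.
  by move/(_ isT t (ltn_ord t)); rewrite valK.
apply/eqP; rewrite -subv0; apply/subvP => v /memv_capP[Xv vW].
have vE := @coord_span _ _ _ (in_tuple X) v Xv.
rewrite memv0 vE; apply/eqP/big1 => t _.
have := freeXW (fun t => oapp (fun i => coord (in_tuple X) i v) 0 (insub t)).
by rewrite lincomb_ord -vE => /(_ vW t (ltn_ord t)); rewrite valK /= => ->; rewrite scale0r.
Qed.

Lemma dim_free_mod X W : free_mod X W -> \dim (<<X>> + W) = (size X + \dim W)%N.
Proof.
case/free_mod_cap=> /eqP dimX capXW.
by have := dimv_sum_cap <<X>> W; rewrite capXW dimv0 addn0 dimX.
Qed.

Lemma select_free_mod W X :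
  exists Y, [/\ {subset Y <= X}, free_mod Y W & {subset X <= (<<Y>> + W)%VS}].
Proof.
suff [Y [YX freeYW XYW]] : exists Y, [/\ {subset Y <= X}, free (Y ++ vbasis W) &
    {subset X <= (<<Y>> + W)%VS}].
  exists Y; split=> // c cW t tY.
  move: freeYW; rewrite cat_free => /and3P[freeY _ /directv_addP capYW].
  have : lincomb Y c \in (<<Y>> :&: <<vbasis W>>)%VS.
    by rewrite memv_cap lincomb_span (span_basis (vbasisP W)) cW.
  rewrite capYW memv0 => /eqP cY0.
  exact: (@freeP _ _ _ (in_tuple Y) freeY (fun t => c t) cY0 (Ordinal tY)).
elim: X => [|x X [Y [YX freeYW XYW]]].
  by exists [::]; split=> //=; apply: basis_free (vbasisP W).
have YxYW : (<<Y>> + W <= <<x :: Y>> + W)%VS.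
  by apply: addvS => //; apply: sub_span => y Yy; rewrite inE Yy orbT.
have [xYW | xYW] := boolP (x \in (<<Y>> + W)%VS).
  exists Y; split=> [y /YX Xy | // | y /[!inE] /orP[/eqP-> // | /XYW //]].
  by rewrite inE Xy orbT.
exists (x :: Y); split.
- by move=> y /[!inE] /orP[-> // | /YX ->]; rewrite orbT.
- by rewrite cat_cons free_cons freeYW andbT span_cat (span_basis (vbasisP W)).
move=> y /[!inE] /orP[/eqP-> | /XYW /(subvP YxYW) //].
by rewrite span_cons -addvA; apply/(subvP (addvSl _ _))/memv_line.
Qed.

Lemma vspace_chain_stable (P : nat -> {vspace vT}) :
  (forall j, (P j.+1 <= P j)%VS) -> exists j, P j.+1 = P j.
Proof.
move=> Pdec; pose d := \dim (P 0).
have [/existsP[j /eqP Pj] | /existsPn Pneq] := boolP [exists j : 'I_d.+1, P j.+1 == P j].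
  by exists j.
have dimP j : (j <= d.+1)%N -> (\dim (P j) + j <= d)%N.
  elim: j => [|j IHj] jd; first by rewrite addn0.
  have /= := Pneq (Ordinal jd); rewrite -(ltn_leqif (dimv_leqif_eq (Pdec j))).
  by move: (IHj (ltnW jd)); lia.
by move: (dimP _ (leqnn _)); lia.
Qed.

End SpanLemmas.

Section NilpotentSubspace.
Variables (k : fieldType) (A : falgType k).
Implicit Types (R M : {vspace A}).

Lemma prodv_decomp R M v : v \in (R * M)%VS ->
  exists2 a : 'I_(\dim M) -> A, forall t, a t \in R & v = \sum_t a t * (vbasis M)`_t.
Proof.
pose P v := exists2 a : 'I_(\dim M) -> A, forall t, a t \in R & v = \sum_t a t * (vbasis M)`_t.
rewrite [@prodv _ _]unlock; move: v; apply: (@span_ind _ _ P).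
- by exists (fun=> 0) => [t|]; rewrite ?mem0v // big1 // => t _; rewrite mul0r.
- move=> c u w [a aR ->] [b bR ->]; exists (fun t => c *: a t + b t).
    by move=> t; rewrite memvD ?memvZ.
  by rewrite scaler_sumr -big_split; apply: eq_bigr => t _; rewrite mulrDl scalerAl.
move=> _ /allpairsP[[u w] [/= /vbasis_mem uR /vbasis_mem wM ->]].
exists (fun t => coord (vbasis M) t w *: u) => [t|]; first by rewrite memvZ.
rewrite {1}(coord_vbasis wM) mulr_sumr; apply: eq_bigr => t _.
by rewrite -scalerAr scalerAl.
Qed.

Lemma nakayama_vspace R M :
  (forall v, v \in R -> in_rad v) -> (M <= R * M)%VS -> M = 0%VS.
Proof.
move=> Rrad MRM; pose m (t : 'I_(\dim M)) := (vbasis M)`_t.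
have mdecomp : forall t, exists c : 'I_(\dim M) -> A,
    (forall s, c s \in R) /\ m t = \sum_s c s * m s.
  move=> t; have /prodv_decomp[c cR mt] : m t \in (R * M)%VS.
    by apply/(subvP MRM)/vbasis_mem/mem_nth; rewrite size_tuple.
  by exists c.
have [c cP] := fin_all_exists mdecomp.
have m0 := nakayama (fun t s => Rrad _ ((cP t).1 s)) (fun t => (cP t).2).
apply/eqP; rewrite -subv0 -(span_basis (vbasisP M)); apply/span_subvP => x.
case/(nthP 0) => t; rewrite size_tuple => tM <-.
by have := m0 (Ordinal tM); rewrite /m /= => ->; rewrite mem0v.
Qed.

Lemma rad_subalg_nilpotent R :
  (R * R <= R)%VS -> (forall v, v \in R -> in_rad v) -> exists m, (R ^+ m.+1 = 0)%VS.
Proof.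
move=> RR Rrad.
have [|j Rj] := @vspace_chain_stable _ _ (fun j => R ^+ j.+1)%VS.
  elim=> [|j IHj]; first by rewrite expvSl.
  by rewrite expvSl [X in (_ <= X)%VS]expvSl prodvSr.
exists j; apply: nakayama_vspace Rrad _.
by rewrite -expvSl Rj.
Qed.

End NilpotentSubspace.

Lemma free_orthogonal_idempotents (k : fieldType) (A : falgType k) (X : seq A) :
  uniq X -> {in X &, forall x y, x * y = if x == y then x else 0} ->
  {in X, forall x, x != 0} -> free X.
Proof.
move=> Xuniq Xorth Xnz; apply/(@freeP _ _ _ (in_tuple X)) => c cX0 t.
have Xt : X`_t \in X by apply/mem_nth.
have := congr1 (fun v => v * X`_t) cX0; rewrite mul0r mulr_suml (bigD1 t) //=.
rewrite big1 => [|s st]; last first.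
  by rewrite -scalerAl Xorth ?mem_nth // nth_uniq // val_eqE (negbTE st) scaler0.
rewrite -scalerAl Xorth // eqxx addr0 => /eqP.
by rewrite scaler_eq0 (negbTE (Xnz _ Xt)) orbF => /eqP.
Qed.

Section Idempotents.
Variables (k : fieldType) (A : falgType k) (n : nat) (e : 'I_n -> A).
Hypothesis He : complete_prim_orth e.

Lemma mul_ee i j : e i * e j = if i == j then e i else 0.
Proof. by case: He => ee eij _ _; case: eqP => [->|/eqP]; [exact: ee | exact: eij]. Qed.

Lemma e_neq0 i : e i != 0.
Proof. by case: He => _ _ _ /(_ i) []. Qed.

Lemma e_notin_rad i : ~ in_rad (e i).
Proof.
move/(in_rad_idem (a := e i)); rewrite mul_ee eqxx => /(_ erefl) /eqP.
by rewrite (negbTE (e_neq0 i)).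
Qed.

Lemma in_rad_scale_e (c : k) i : in_rad (c *: e i) -> c = 0.
Proof.
have [-> // | c0 rce] := eqVneq c 0; case: (e_notin_rad (i := i)).
by have := in_radZ c^-1 rce; rewrite scalerA mulVf // scale1r.
Qed.

Lemma e_inj : injective e.
Proof.
move=> i j eij; apply/eqP; apply: contraTT (e_neq0 j) => /negbTE ij.
by have := mul_ee i j; rewrite eij mul_ee eqxx ij => ->; rewrite eqxx.
Qed.

Lemma peirce_decomp (a : A) : a = \sum_i \sum_j e j * a * e i.
Proof.
have [_ _ sum_e _] := He.
rewrite -[a in LHS]mulr1 -[a in LHS]mul1r -sum_e mulr_sumr; apply: eq_bigr => i _.
by rewrite !mulr_suml.
Qed.

Lemma free_e : free [seq e i | i <- enum 'I_n].
Proof.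
apply: free_orthogonal_idempotents.
- by rewrite map_inj_uniq ?enum_uniq //; exact: e_inj.
- by move=> _ _ /mapP[i _ ->] /mapP[j _ ->]; rewrite mul_ee (inj_eq e_inj).
- by move=> _ /mapP[i _ ->]; exact: e_neq0.
Qed.

Definition ecomb (c : 'I_n -> k) : A := \sum_i c i *: e i.

Lemma e_mul_ecomb j c : e j * ecomb c = c j *: e j.
Proof.
rewrite mulr_sumr (bigD1 j) //= big1 => [|i ij]; last first.
  by rewrite -scalerAr mul_ee eq_sym (negbTE ij) scaler0.
by rewrite -scalerAr mul_ee eqxx addr0.
Qed.

Lemma ecomb_mul_e j c : ecomb c * e j = c j *: e j.
Proof.
rewrite mulr_suml (bigD1 j) //= big1 => [|i ij]; last first.
  by rewrite -scalerAl mul_ee (negbTE ij) scaler0.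
by rewrite -scalerAl mul_ee eqxx addr0.
Qed.

Lemma ecombB c c' : ecomb c - ecomb c' = ecomb (fun i => c i - c' i).
Proof. by rewrite -sumrB; apply: eq_bigr => i _; rewrite scalerBl. Qed.

Lemma ecomb_in_rad c i : in_rad (ecomb c) -> c i = 0.
Proof. by move/(in_radMl (e i)); rewrite e_mul_ecomb; apply: in_rad_scale_e. Qed.

Lemma span_e_ecomb v : v \in <<[seq e i | i <- enum 'I_n]>>%VS -> exists c, v = ecomb c.
Proof.
move: v; apply: (@span_ind _ _ (fun v => exists c, v = ecomb c)).
- by exists (fun=> 0); rewrite /ecomb big1 // => i _; rewrite scale0r.
- move=> x _ _ [c ->] [c' ->]; exists (fun i => x * c i + c' i).
  by rewrite /ecomb scaler_sumr -big_split; apply: eq_bigr => i _; rewrite scalerDl scalerA.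
move=> _ /mapP[i _ ->]; exists (fun j => (j == i)%:R).
rewrite /ecomb (bigD1 i) //= eqxx scale1r big1 ?addr0 // => j /negbTE->.
by rewrite scale0r.
Qed.

End Idempotents.

Section LinearFun.
Variables (k : fieldType) (V : lmodType k) (L : V -> V).
Hypothesis Llin : linear L.

Lemma linear_fun0 : L 0 = 0.
Proof. by have := Llin 1 0 0; rewrite !scale1r addr0 -[LHS]addr0 => /addrI/esym. Qed.

Lemma linear_funD u v : L (u + v) = L u + L v.
Proof. by rewrite -[u]scale1r Llin !scale1r. Qed.

Lemma linear_funZ (c : k) u : L (c *: u) = c *: L u.
Proof. by rewrite -[c *: u]addr0 Llin linear_fun0 addr0. Qed.

Lemma linear_fun_sum (I : Type) (r : seq I) (F : I -> V) :
  L (\sum_(i <- r) F i) = \sum_(i <- r) L (F i).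
Proof. by elim/big_rec2: _ => [|i x y _ <-]; [exact: linear_fun0 | exact: linear_funD]. Qed.

(* Independence of eigenvectors: applying [L - g q] kills the eigenvalue [g q],
   so induct on [size s]. *)
Lemma eigen_comb_split (I : eqType) (w : I -> V) (g t : I -> k) (s : seq I) :
  (forall p, p \in s -> L (w p) = g p *: w p) ->
  \sum_(p <- s) t p *: w p = 0 -> forall mu, \sum_(p <- s | g p == mu) t p *: w p = 0.
Proof.
elim: {s}(size s) {-2}s (leqnn (size s)) t => [|N IHN] s sN t Lw st0 mu.
  by move: sN; rewrite leqn0 => /nilP->; rewrite big_nil.
have [/allP smu | /allPn[q qs qmu]] := boolP (all (fun p => g p == mu) s).
  by rewrite -big_filter (eq_in_filter smu) filter_predT.
pose lam := g q; pose s' := [seq p <- s | g p != lam].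
pose t' p := t p * (g p - lam).
have s'N : (size s' <= N)%N.
  have : (count (fun p => g p != lam) s < size s)%N.
    rewrite -(count_predC (fun p => g p != lam)) -addn1 leq_add2l -has_count.
    by apply/hasP; exists q => //=; rewrite negbK.
  by rewrite size_filter; lia.
have Lw' p : p \in s' -> L (w p) = g p *: w p by rewrite mem_filter => /andP[_ /Lw].
have s't'0 : \sum_(p <- s') t' p *: w p = 0.
  rewrite big_filter big_mkcond /=.
  transitivity (L (\sum_(p <- s) t p *: w p) - lam *: \sum_(p <- s) t p *: w p).
    rewrite linear_fun_sum scaler_sumr -sumrB big_seq [RHS]big_seq.
    apply: eq_bigr => p ps; rewrite linear_funZ Lw // /t' !scalerA -scalerBl.
    rewrite [lam * _]mulrC -mulrBr.
    by have [->|] := eqVneq (g p) lam; rewrite ?subrr ?mulr0 ?scale0r.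
  by rewrite st0 linear_fun0 scaler0 subr0.
have mulam : mu != lam by rewrite eq_sym.
have := IHN s' s'N t' Lw' s't'0 mu.
have -> : \sum_(p <- s' | g p == mu) t' p *: w p =
          (mu - lam) *: \sum_(p <- s | g p == mu) t p *: w p.
  rewrite big_filter_cond scaler_sumr; apply: eq_big => [p | p /andP[_ /eqP gpmu]].
    by have [->|] := eqVneq (g p) mu; rewrite ?mulam ?andbF.
  by rewrite /t' gpmu scalerA mulrC.
by move/eqP; rewrite scaler_eq0 subr_eq0 (negbTE mulam) => /eqP.
Qed.

End LinearFun.

Section Derivations.
Variables (k : fieldType) (A : falgType k) (n : nat) (e : 'I_n -> A).
Hypothesis He : complete_prim_orth e.
Implicit Types (d : A -> A) (c : 'I_n -> k).

Lemma der0_linear d : der0 e d -> linear d.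
Proof. by case. Qed.

Lemma der0M d : der0 e d -> forall a b, d (a * b) = d a * b + a * d b.
Proof. by case. Qed.

Lemma der0D d d' : der0 e d -> der0 e d' -> der0 e (fun a => d a + d' a).
Proof.
move=> [dlin dM de] [d'lin d'M d'e]; split=> [c a b | a b | i].
- by rewrite dlin d'lin scalerDr addrACA.
- by rewrite dM d'M mulrDl mulrDr addrACA.
- by rewrite de d'e addr0.
Qed.

Lemma der0_inner c : der0 e (fun a => ecomb e c * a - a * ecomb e c).
Proof.
split=> [x a b | a b | i].
- by rewrite mulrDr mulrDl -scalerAr -scalerAl opprD addrACA scalerBr.
- by rewrite mulrBl mulrBr !mulrA addrA subrK.
- by rewrite (ecomb_mul_e He) (e_mul_ecomb He) subrr.
Qed.

Lemma hh1_eq_add_inner d d' c :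
  hh1_eq e d d' -> hh1_eq e d (fun a => d' a + (ecomb e c * a - a * ecomb e c)).
Proof.
move=> [c0 dd']; exists (fun i => c0 i - c i) => E a.
rewrite /E -/(ecomb e _) -ecombB mulrBl mulrBr opprD addrA dd'.
by rewrite !opprB addrACA [RHS]addrACA [- (a * _) - _]addrC.
Qed.

End Derivations.

Section QuiverPaths.
Variables (n : nat) (Arr : finType) (src tgt : Arr -> 'I_n).

Local Notation pok := (path_ok src tgt).
Local Notation pend := (path_end src tgt).

Lemma letters_ok_cat x s1 s2 :
  letters_ok src tgt x (s1 ++ s2) =
  letters_ok src tgt x s1 && letters_ok src tgt (last x (map (letter_tgt src tgt) s1)) s2.
Proof. by elim: s1 x => [|l s IHs] x //=; rewrite IHs andbA. Qed.

Lemma path_ok_rcons x s a : pok (x, rcons s a) = pok (x, s) && (src a == pend (x, s)).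
Proof. by rewrite /path_ok /walk_ok /= map_rcons -cats1 letters_ok_cat /= andbT. Qed.

Lemma path_end_rcons x s a : pend (x, rcons s a) = tgt a.
Proof. by rewrite /path_end /wend /= !map_rcons last_rcons. Qed.

Lemma path_ok_cat p q : pok p -> pok q -> q.1 = pend p -> pok (p.1, p.2 ++ q.2).
Proof.
case: p q => x s [y t] /=; rewrite /path_ok /walk_ok /= map_cat letters_ok_cat.
by move=> -> tok yE /=; move: tok; rewrite yE.
Qed.

Lemma path_ok_arrow a : pok (src a, [:: a]).
Proof. by rewrite /path_ok /walk_ok /= /letter_src /= eqxx. Qed.

End QuiverPaths.

Section PathImages.
Variables (k : fieldType) (A : falgType k) (n : nat) (e : 'I_n -> A).
Hypothesis He : complete_prim_orth e.
Variables (Arr : finType) (src tgt : Arr -> 'I_n) (nu : Arr -> A).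
Hypothesis nu_peirce : forall a, nu a = e (tgt a) * nu a * e (src a).

Local Notation NP := (nu_path e nu).
Local Notation pok := (path_ok src tgt).
Local Notation pend := (path_end src tgt).

Lemma nu_path_rcons x s a : NP (x, rcons s a) = nu a * NP (x, s).
Proof. by rewrite /nu_path /= foldl_rcons. Qed.

Lemma foldl_nu_mulr (x y : A) s :
  foldl (fun acc a => nu a * acc) (x * y) s = foldl (fun acc a => nu a * acc) x s * y.
Proof. by elim: s x => [|a s IHs] x //=; rewrite mulrA IHs. Qed.

Lemma foldl_nu0 s : foldl (fun acc a => nu a * acc) 0 s = 0.
Proof. by elim: s => [|a s IHs] //=; rewrite mulr0. Qed.

Lemma nu_path_mul_e p x : NP p * e x = if p.1 == x then NP p else 0.
Proof.
case: p => y s; rewrite /nu_path /= -foldl_nu_mulr (mul_ee He).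
by case: eqP => // _; rewrite foldl_nu0.
Qed.

Lemma e_mul_nu_path p y : pok p -> e y * NP p = if pend p == y then NP p else 0.
Proof.
case: p => x s; elim/last_ind: s => [|s a IHs] /=.
  by rewrite /nu_path /= (mul_ee He) eq_sym => _; case: eqP => // ->.
rewrite path_ok_rcons => /andP[_ /eqP srca].
rewrite nu_path_rcons path_end_rcons nu_peirce -!mulrA mulrA (mul_ee He) eq_sym.
by case: eqP => [<- // | _]; rewrite mul0r.
Qed.

Lemma nu_path_peirce p : pok p -> NP p = e (pend p) * NP p * e p.1.
Proof. by move=> pp; rewrite e_mul_nu_path // eqxx nu_path_mul_e eqxx. Qed.

Lemma nu_path_mul p q : pok p ->
  NP q * NP p = if q.1 == pend p then NP (p.1, p.2 ++ q.2) else 0.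
Proof.
move=> pp; case: q => y t /=; rewrite {1}/nu_path /= -foldl_nu_mulr e_mul_nu_path // eq_sym.
case: eqP => _; last exact: foldl_nu0.
by case: p pp => x s _; rewrite /nu_path /= foldl_cat.
Qed.

Lemma nu_path_arrow a : NP (src a, [:: a]) = nu a.
Proof. by rewrite /nu_path /= {1}nu_peirce -mulrA (mul_ee He) eqxx -nu_peirce. Qed.

Lemma ecomb_mul_nu_path c p : pok p -> ecomb e c * NP p = c (pend p) *: NP p.
Proof.
move=> pp; rewrite {1}(nu_path_peirce pp) !mulrA (ecomb_mul_e He) -!scalerAl.
by rewrite -(nu_path_peirce pp).
Qed.

Lemma nu_path_mul_ecomb c p : pok p -> NP p * ecomb e c = c p.1 *: NP p.
Proof.
move=> pp; rewrite {1}(nu_path_peirce pp) -!mulrA (e_mul_ecomb He) -!scalerAr !mulrA.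
by rewrite -(nu_path_peirce pp).
Qed.

Lemma der0_nu_path d (lam : Arr -> k) : der0 e d -> (forall a, d (nu a) = lam a *: nu a) ->
  forall p, d (NP p) = (\sum_(a <- p.2) lam a) *: NP p.
Proof.
move=> dd dnu [x s]; elim/last_ind: s => [|s a IHs] /=.
  by case: dd => _ _ de; rewrite big_nil scale0r; apply: de.
rewrite nu_path_rcons (der0M dd) dnu IHs big_rcons /= -scalerAl -scalerAr scalerDl.
by rewrite addrC.
Qed.

Definition path_comb (m : nat) (v : A) : Prop :=
  exists l : seq (k * qpath n Arr), (forall q, q \in l -> pok q.2 /\ (m <= size q.2.2)%N) /\
    v = \sum_(q <- l) q.1 *: NP q.2.

Lemma path_comb0 m : path_comb m 0.
Proof. by exists [::]; rewrite big_nil. Qed.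

Lemma path_combD m u v : path_comb m u -> path_comb m v -> path_comb m (u + v).
Proof.
move=> [l [lm ->]] [l' [l'm ->]]; exists (l ++ l'); rewrite big_cat; split=> // q.
by rewrite mem_cat => /orP[/lm | /l'm].
Qed.

Lemma path_combZ m (c : k) v : path_comb m v -> path_comb m (c *: v).
Proof.
move=> [l [lm ->]]; exists [seq (c * q.1, q.2) | q <- l]; split.
  by move=> _ /mapP[q /lm ? ->].
by rewrite big_map scaler_sumr; apply: eq_bigr => q _; rewrite scalerA.
Qed.

Lemma path_comb_sum m (I : Type) (r : seq I) (P : pred I) (F : I -> A) :
  (forall i, P i -> path_comb m (F i)) -> path_comb m (\sum_(i <- r | P i) F i).
Proof. by move=> PF; apply: big_ind => //; [exact: path_comb0 | exact: path_combD]. Qed.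

Lemma path_comb_path m p : pok p -> (m <= size p.2)%N -> path_comb m (NP p).
Proof.
by move=> pp pm; exists [:: (1, p)]; rewrite big_seq1 scale1r; split=> // q /[!inE] /eqP->.
Qed.

Lemma path_combM m l x y : path_comb m x -> path_comb l y -> path_comb (m + l) (x * y).
Proof.
move=> [lx [lxm ->]] [ly [lyl ->]].
rewrite mulr_suml big_seq; apply: path_comb_sum => q /lxm[qok qm].
rewrite mulr_sumr big_seq; apply: path_comb_sum => p /lyl[pok pl].
rewrite -scalerAl -scalerAr; apply/path_combZ/path_combZ.
rewrite nu_path_mul //; case: eqP => [qp | _]; last exact: path_comb0.
by apply: path_comb_path; [exact: path_ok_cat | rewrite size_cat addnC leq_add].
Qed.

Lemma path_comb_vanish N v : (forall p, pok p -> (N <= size p.2)%N -> NP p = 0) ->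
  path_comb N v -> v = 0.
Proof.
move=> NP0 [l [lN ->]]; rewrite big_seq big1 // => q /lN[qok qN].
by rewrite NP0 // scaler0.
Qed.

Lemma nu_sum_path_comb s c : all pok s -> path_comb 0 (nu_sum e nu s c).
Proof.
move=> /allP sok; rewrite /nu_sum big_seq; apply: path_comb_sum => p ps.
by apply/path_combZ/path_comb_path; [apply: sok | ].
Qed.

Lemma path_comb_nu_sum v : path_comb 0 v ->
  exists s c, [/\ uniq s, all pok s & v = nu_sum e nu s c].
Proof.
move=> [l [lok ->]]; elim: l lok => [|q l IHl] lok.
  by exists [::], (fun=> 0); rewrite big_nil /nu_sum big_nil.
rewrite big_cons; have [q' | s [c [suniq sok ->]]] := IHl.
  by move=> q'l; apply: lok; rewrite inE q'l orbT.
have [qok _] := lok q (mem_head _ _).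
have [qs | qNs] := boolP (q.2 \in s).
  exists s, (fun p => if p == q.2 then c p + q.1 else c p); split=> //.
  rewrite /nu_sum (bigD1_seq q.2) //= [in RHS](bigD1_seq q.2) //= eqxx scalerDl.
  by rewrite addrCA addrA; congr (_ + _); apply: eq_bigr => p /negbTE->.
exists (q.2 :: s), (fun p => if p == q.2 then q.1 else c p); split.
- by rewrite /= qNs.
- by rewrite /= qok.
rewrite /nu_sum big_cons eqxx; congr (_ + _); rewrite big_seq [in RHS]big_seq.
by apply: eq_bigr => p ps; case: eqP => // pq; move: qNs; rewrite -pq ps.
Qed.

End PathImages.

Section PathBasis.
Variables (k : fieldType) (A : falgType k) (n : nat) (e : 'I_n -> A).
Hypothesis He : complete_prim_orth e.
Variables (Arr : finType) (src tgt : Arr -> 'I_n) (nu : Arr -> A).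
Hypothesis nu_pres : is_presentation e src tgt nu.

Local Notation NP := (nu_path e nu).
Local Notation pok := (path_ok src tgt).

Lemma nontrivial_path_in_rad p : pok p -> p.2 != [::] -> in_rad (NP p).
Proof.
case: nu_pres => nu_peirce nu_surj [[|[|N]] [// _ NP0] _] pp p2 y.
have [s [c [sok ->]]] := nu_surj y.
pose z := nu_sum e nu s c * NP p.
have z1 : path_comb e src tgt nu 1 z.
  apply: (path_combM He nu_peirce (nu_sum_path_comb e nu c sok)).
  by apply: path_comb_path => //; case: p.2 p2.
have zpow m : path_comb e src tgt nu m.+1 (z ^+ m.+1).
  elim: m => [|m IHm]; first by rewrite expr1.
  by rewrite exprSr -addn1; apply: (path_combM He nu_peirce).
by apply: (@nilpotent_linv_one_sub _ _ _ N.+2); apply: path_comb_vanish (zpow N.+1).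
Qed.

Lemma path_adapted_basis :
  exists2 B, adapted_basis e B & forall b, b \in B -> exists2 p, pok p & b = NP p.
Proof.
case: nu_pres => nu_peirce nu_surj _ _.
pose good b := exists2 p, pok p & b = NP p.
have span_good v : exists2 X, (forall x, x \in X -> good x) & v \in <<X>>%VS.
  have [s [c [/allP sok ->]]] := nu_surj v; exists [seq NP p | p <- s].
    by move=> _ /mapP[p ps ->]; exists p => //; apply: sok.
  by rewrite /nu_sum big_seq; apply: memv_suml => p ps; apply/memvZ/memv_span/map_f.
have good_e x : x \in [seq e i | i <- enum 'I_n] -> good x.
  by move=> /mapP[i _ ->]; exists (i, [::]).
have [B Bbasis [Bgood eB]] := extend_free_basis span_good (free_e He) good_e.
exists B => //; split=> //.
- by move=> _ /Bgood[p pp ->]; exists p.1, (path_end src tgt p); apply: (nu_path_peirce He).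
- by move=> i; apply/eB/map_f; rewrite mem_enum.
move=> _ /Bgood[[x [|a s]] pp ->] Ne; first by have /eqP := Ne x.
exact: nontrivial_path_in_rad.
Qed.

End PathBasis.

Lemma diagonalizable_of_presentation (k : fieldType) (A : falgType k) (n : nat)
    (e : 'I_n -> A) (Arr : finType) (src tgt : Arr -> 'I_n) (nu : Arr -> A) x0 gamma
    (D : (A -> A) -> Prop) :
  complete_prim_orth e -> is_presentation e src tgt nu ->
  (forall d, D d -> in_im_theta e src tgt nu x0 gamma d) -> diagonalizable_HH1 e D.
Proof.
move=> He nu_pres Dtheta; have [B Bbasis Bpath] := path_adapted_basis He nu_pres.
exists B; split=> // d /Dtheta[f [_ [d' [d'der d'path dd']]]].
by exists d'; split=> // _ /Bpath[p pp ->]; eexists; apply: d'path.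
Qed.

Section AdaptedBasisRadical.
Variables (k : fieldType) (A : falgType k) (n : nat) (e : 'I_n -> A).
Hypothesis He : complete_prim_orth e.
Variable B : seq A.
Hypothesis HB : adapted_basis e B.

Definition rad_basis := [seq b <- B | [forall i, b != e i]].
Definition radv := <<rad_basis>>%VS.
Definition block_basis i j := [seq b <- rad_basis | e j * b * e i == b].

Lemma rad_basis_rad b : b \in rad_basis -> in_rad b.
Proof. by rewrite mem_filter => /andP[/forallP Ne Bb]; case: HB => _ _ _; apply. Qed.

Lemma radv_rad v : v \in radv -> in_rad v.
Proof.
move: v; apply: (@span_ind _ _ (@in_rad _ A)); [exact: in_rad0 | | exact: rad_basis_rad].
by move=> c u w ru rw; apply/in_radD/rw/in_radZ.
Qed.

Lemma rad_radv v : in_rad v -> v \in radv.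
Proof.
move=> rv; pose Be := [seq b <- B | ~~ [forall i, b != e i]].
have : v \in (radv + <<Be>>)%VS.
  have BBe : perm_eq (rad_basis ++ Be) B by apply/permPl/perm_filterC.
  have [/andP[/eqP spanB _] _ _ _] := HB.
  by rewrite /radv -span_cat (eq_span (perm_mem BBe)) spanB memvf.
case/memv_addP=> u ur [w wBe vE]; rewrite vE.
have [|c wE] := span_e_ecomb (e := e) (v := w).
  apply: subvP wBe; apply/span_subvP => b; rewrite mem_filter negb_forall.
  by case/andP=> /existsP[i /negPn /eqP->] _; apply/memv_span; rewrite map_f ?mem_enum.
have rw : in_rad (ecomb e c).
  by rewrite -wE -(addKr u w) -vE; apply: in_radD rv; apply/in_radN/radv_rad.
suff -> : w = 0 by rewrite addr0.
by rewrite wE /ecomb big1 // => i _; rewrite (ecomb_in_rad He i rw) scale0r.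
Qed.

Lemma radvM : (radv * radv <= radv)%VS.
Proof. by apply/prodvP => u v ur _; apply/rad_radv/in_radMr/radv_rad. Qed.

Lemma in_rad2_radv v : in_rad2 v <-> v \in (radv * radv)%VS.
Proof.
split.
  move=> [s [srad ->]]; rewrite big_seq; apply: memv_suml => p /srad[r1 r2].
  by apply: memv_mul; apply: rad_radv.
move: v; rewrite [@prodv _ _]unlock.
apply: (@span_ind _ _ (@in_rad2 _ A)); first exact: in_rad2_0.
  by move=> c a b ra rb; apply/in_rad2D/rb/in_rad2Z.
move=> _ /allpairsP[[a b] [/= /vbasis_mem ar /vbasis_mem br ->]].
by apply: in_rad2M; apply: radv_rad.
Qed.

Lemma block_basisP b i j : b \in block_basis i j -> b = e j * b * e i /\ b \in rad_basis.
Proof. by rewrite mem_filter => /andP[/eqP]. Qed.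

Lemma radv_block v i j : v \in radv -> e j * v * e i \in <<block_basis i j>>%VS.
Proof.
move: v; apply: (@span_ind _ _ (fun v => e j * v * e i \in <<block_basis i j>>%VS)).
- by rewrite mulr0 mul0r mem0v.
- move=> c u w ur wr; rewrite mulrDr mulrDl -scalerAr -scalerAl.
  by apply: memvD => //; apply: memvZ.
move=> b brad; have [bij | bNij] := eqVneq (e j * b * e i) b.
  by rewrite bij; apply: memv_span; rewrite mem_filter bij eqxx.
have [p [q bpq]] : exists p q, b = e q * b * e p.
  by case: HB => _ Bblock _ _; apply: Bblock; move: brad; rewrite mem_filter => /andP[].
have -> : e j * b * e i = (e j * e q) * b * (e p * e i) by rewrite {1}bpq !mulrA.
rewrite !(mul_ee He); case: (j =P q) => [jq | _]; last by rewrite !mul0r mem0v.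
case: (p =P i) => [pi | _]; last by rewrite mulr0 mem0v.
by move: bNij; rewrite jq -pi -bpq eqxx.
Qed.

End AdaptedBasisRadical.

Section ArrowImages.
Variables (k : fieldType) (A : falgType k) (n : nat) (e : 'I_n -> A).
Hypothesis He : complete_prim_orth e.
Variables (Arr : finType) (src tgt : Arr -> 'I_n).
Hypothesis Hq : is_ordinary_quiver e src tgt.
Variable B : seq A.
Hypothesis HB : adapted_basis e B.

Local Notation R := (radv e B).
Local Notation W := (radv e B * radv e B)%VS.

Definition arrows i j := [set a | (src a == i) && (tgt a == j)].

Definition is_arrow_basis i j (X : seq A) : Prop :=
  [/\ {subset X <= block_basis e B i j}, free_mod X W,
      {subset block_basis e B i j <= (<<X>> + W)%VS} & size X = #|arrows i j|].

Lemma exists_arrow_basis i j : exists Y, is_arrow_basis i j Y.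
Proof.
have [Y [Yblock YW blockY]] := select_free_mod W (block_basis e B i j).
exists Y; split=> //.
have [X [sizeX Xrad Xspan XW]] := Hq i j.
have XfreeW : free_mod X W by move=> c /(in_rad2_radv He HB); apply: XW.
have blockYW : (<<block_basis e B i j>> <= <<Y>> + W)%VS by apply/span_subvP.
have XYW : (<<X>> + W = <<Y>> + W)%VS.
  apply/eqP; rewrite eqEsubv !subv_add !addvSr !andbT; apply/andP; split.
    apply/span_subvP => x /Xrad[xrad xE]; apply: (subvP blockYW).
    by rewrite xE; apply/radv_block/rad_radv.
  apply/span_subvP => y /Yblock /block_basisP[yE yrad].
  have [c /(in_rad2_radv He HB) ycW] := Xspan y (rad_basis_rad HB yrad) yE.
  have -> : y = lincomb X c + (y - lincomb X c) by rewrite addrC subrK.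
  exact: memv_add (lincomb_span X c) ycW.
by apply/eqP; rewrite /arrows -sizeX -(eqn_add2r (\dim W)) -!dim_free_mod // XYW.
Qed.

Variable Y : 'I_n -> 'I_n -> seq A.
Hypothesis YP : forall i j, is_arrow_basis i j (Y i j).

Definition nuB (a : Arr) : A :=
  (Y (src a) (tgt a))`_(index a (enum (arrows (src a) (tgt a)))).

Lemma Y_nuB i j : Y i j = [seq nuB a | a <- enum (arrows i j)].
Proof.
have [_ _ _ sizeY] := YP i j.
apply: (@eq_from_nth _ 0) => [|t]; first by rewrite size_map -cardE.
rewrite sizeY cardE => ts.
have a0 : Arr by case: (enum (arrows i j)) ts.
rewrite (nth_map a0) // /nuB.
have : nth a0 (enum (arrows i j)) t \in arrows i j by rewrite -mem_enum mem_nth.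
by rewrite inE => /andP[/eqP-> /eqP->]; rewrite index_uniq ?enum_uniq.
Qed.

Lemma nuB_block a : nuB a \in block_basis e B (src a) (tgt a).
Proof.
have [Yblock _ _ _] := YP (src a) (tgt a).
by apply: Yblock; rewrite Y_nuB map_f // mem_enum inE !eqxx.
Qed.

Lemma nuB_peirce a : nuB a = e (tgt a) * nuB a * e (src a).
Proof. by have [] := block_basisP (nuB_block a). Qed.

Lemma nuB_in_B a : nuB a \in B.
Proof. by have [_] := block_basisP (nuB_block a); rewrite mem_filter => /andP[]. Qed.

Lemma nuB_radv a : nuB a \in R.
Proof. by have [_ ?] := block_basisP (nuB_block a); apply: memv_span. Qed.

Lemma nuB_free_mod i j (c : Arr -> k) :
  \sum_(a <- enum (arrows i j)) c a *: nuB a \in W -> forall a, a \in arrows i j -> c a = 0.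
Proof.
move=> cW a aij; have [_ Yfree _ _] := YP i j.
set s := enum (arrows i j); have a_s : a \in s by rewrite mem_enum.
have := Yfree (fun t => c (nth a s t)); rewrite /lincomb Y_nuB size_map.
have -> : \sum_(t < size s) c (nth a s t) *: [seq nuB b | b <- s]`_t =
          \sum_(b <- s) c b *: nuB b.
  by rewrite (big_nth a) big_mkord; apply: eq_bigr => t _; rewrite (nth_map a).
by move=> /(_ cW (index a s)); rewrite nth_index // index_mem; apply.
Qed.

End ArrowImages.

Lemma sum_length1_paths (n : nat) (Arr : finType) (src tgt : Arr -> 'I_n) (V : nmodType)
    (s : seq (qpath n Arr)) (F : qpath n Arr -> V) i j :
  uniq s -> all (path_ok src tgt) s ->
  \sum_(q <- s | (q.1 == i) && (path_end src tgt q == j) && (size q.2 == 1%N)) F q =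
  \sum_(a <- enum (arrows src tgt i j) | (i, [:: a]) \in s) F (i, [:: a]).
Proof.
move=> suniq /allP sok; rewrite -big_filter -[RHS]big_filter.
rewrite -(big_map (fun a => (i, [:: a])) xpredT).
apply/perm_big/uniq_perm; first exact: filter_uniq.
  by rewrite map_inj_uniq; [exact/filter_uniq/enum_uniq | move=> a b []].
move=> q; rewrite mem_filter; apply/idP/idP.
  case/andP=> /andP[/andP[/eqP qi qj]] + qs; case: q qi qj qs => x [|a [|? ?]] //= -> qj qs _.
  have /= := sok _ qs; rewrite /path_ok /walk_ok /= /letter_src /= andbT => /eqP srca.
  apply/mapP; exists a => //; rewrite mem_filter qs mem_enum inE srca eqxx.
  by move: qj; rewrite /path_end /wend /=.
case/mapP=> a; rewrite mem_filter mem_enum inE => /andP[qs /andP[_ /eqP tgta]] ->.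
by rewrite qs eqxx /path_end /wend /= /letter_tgt /= tgta eqxx.
Qed.

Section Presentation.
Variables (k : fieldType) (A : falgType k) (n : nat) (e : 'I_n -> A).
Hypothesis He : complete_prim_orth e.
Variables (Arr : finType) (src tgt : Arr -> 'I_n).
Variable B : seq A.
Hypothesis HB : adapted_basis e B.
Variable Y : 'I_n -> 'I_n -> seq A.
Hypothesis YP : forall i j, is_arrow_basis e src tgt B i j (Y i j).

Local Notation R := (radv e B).
Local Notation W := (radv e B * radv e B)%VS.
Local Notation nu := (nuB src tgt Y).
Local Notation NP := (nu_path e nu).
Local Notation pok := (path_ok src tgt).
Local Notation pend := (path_end src tgt).
Local Notation path_comb := (path_comb e src tgt nu).

Let nu_peirce := nuB_peirce YP.

Lemma radv_expS m : (R ^+ m.+1 <= R)%VS.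
Proof.
elim: m => [|m IHm]; first by rewrite expv1.
by rewrite expvSl; apply: subv_trans (radvM He HB); apply: prodvSr.
Qed.

Lemma nu_path_radv_exp x s a :
  pok (x, rcons s a) -> NP (x, rcons s a) \in (R ^+ (size s).+1)%VS.
Proof.
elim/last_ind: s a => [|s b IHs] a.
  rewrite nu_path_rcons expv1 => _.
  exact/(rad_radv He HB)/in_radMr/(radv_rad HB)/(nuB_radv YP).
rewrite path_ok_rcons nu_path_rcons size_rcons expvSl => /andP[sok _].
by apply: memv_mul; [apply: (nuB_radv YP) | apply: IHs].
Qed.

Lemma nu_path_radv p : pok p -> p.2 != [::] -> NP p \in R.
Proof.
by case: p => x; case/lastP=> // s a pp _; apply/(subvP (radv_expS _))/nu_path_radv_exp.
Qed.

Lemma nu_path_radv2 p : pok p -> (2 <= size p.2)%N -> NP p \in W.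
Proof.
case: p => x; case/lastP=> // s a pp; rewrite size_rcons ltnS.
case: s pp => // b s pp _; have := nu_path_radv_exp pp; rewrite expvSl.
by apply: (subvP (prodvSr _ (radv_expS _))).
Qed.

Lemma radv_nilpotent : exists m, (R ^+ m.+1 = 0)%VS.
Proof. by apply: rad_subalg_nilpotent; [exact: radvM | exact: radv_rad]. Qed.

Definition path_approx m v := exists2 u, path_comb 0 u & v - u \in (R ^+ m)%VS.

Lemma path_approx0 m : path_approx m 0.
Proof. by exists 0; [exact: path_comb0 | rewrite subr0 mem0v]. Qed.

Lemma path_approx_lin m (c : k) u v :
  path_approx m u -> path_approx m v -> path_approx m (c *: u + v).
Proof.
move=> [u' u'c uu'] [v' v'c vv']; exists (c *: u' + v'); first exact/path_combD/v'c/path_combZ.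
by rewrite opprD addrACA -scalerBr; apply: memvD => //; apply: memvZ.
Qed.

Lemma path_approx_sum m (I : Type) (r : seq I) (F : I -> A) :
  (forall i, path_approx m (F i)) -> path_approx m (\sum_(i <- r) F i).
Proof.
move=> FA; apply: big_ind => //; first exact: path_approx0.
by move=> u v uA vA; rewrite -[u]scale1r; apply: path_approx_lin.
Qed.

Lemma arrow_span_path_comb i j y : y \in <<Y i j>>%VS -> path_comb 0 y.
Proof.
move: y; apply: (@span_ind _ _ (path_comb 0)); first exact: path_comb0.
  by move=> c u v uc vc; apply/path_combD/vc/path_combZ.
rewrite (Y_nuB YP) => _ /mapP[a _ ->]; rewrite -(nu_path_arrow He nu_peirce).
exact: path_comb_path (path_ok_arrow _ _ a) (leq0n _).
Qed.

Lemma radv_approx2 v : v \in R -> path_approx 2 v.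
Proof.
move=> vR; rewrite (peirce_decomp He v); apply: path_approx_sum => i.
apply: path_approx_sum => j; have [_ _ blockY _] := YP i j.
have /memv_addP[y yY [w wW ->]] : e j * v * e i \in (<<Y i j>> + W)%VS.
  by apply: (subvP _ _ (radv_block He HB i j vR)); apply/span_subvP.
by exists y; [exact: arrow_span_path_comb yY | rewrite addrC addKr].
Qed.

Lemma radv_approx m v : v \in R -> path_approx m.+1 v.
Proof.
elim: m v => [|m IHm] v vR; first by exists 0; [exact: path_comb0 | rewrite subr0 expv1].
have W_approx w : w \in W -> path_approx m.+2 w.
  move: w; rewrite [@prodv _ _]unlock; apply: (@span_ind _ _ (path_approx m.+2)).
  - exact: path_approx0.
  - by move=> c u w; apply: path_approx_lin.
  move=> _ /allpairsP[[x y] [/= /vbasis_mem xR /vbasis_mem yR ->]].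
  have [u uc xu] := IHm x xR; have [u' u'c yu'] := IHm y yR.
  exists (u * u'); first exact: (path_combM He nu_peirce uc u'c).
  have uR : u \in R by rewrite -[u](subKr x) memvB // (subvP (radv_expS m)).
  rewrite -[x * y](subrK (u * y)) -mulrBl -addrA -mulrBr.
  by apply: memvD; [rewrite expvSr memv_mul | rewrite expvSl memv_mul].
have [u uc /W_approx[u' u'c vuu']] := radv_approx2 vR.
by exists (u + u'); [exact: path_combD | rewrite opprD addrA].
Qed.

Lemma path_comb_all v : path_comb 0 v.
Proof.
have [m Rm0] := radv_nilpotent.
have v_approx b : b \in B -> path_comb 0 b.
  move=> bB; have [bNe | /forallPn[i /negPn /eqP->]] := boolP [forall i, b != e i].
    have /(radv_approx m)[u uc] : b \in R by rewrite memv_span // mem_filter bNe.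
    by rewrite Rm0 memv0 subr_eq0 => /eqP->.
  by rewrite -[e i]/(NP (i, [::])); apply: path_comb_path.
have [/andP[/eqP spanB _] _ _ _] := HB.
have : v \in <<B>>%VS by rewrite spanB memvf.
move: v; apply: (@span_ind _ _ (path_comb 0)); [exact: path_comb0 | | exact: v_approx].
by move=> c u w uc wc; apply/path_combD/wc/path_combZ.
Qed.

Lemma block_nu_sum s c i j : all pok s ->
  e j * nu_sum e nu s c * e i = \sum_(q <- s | (q.1 == i) && (pend q == j)) c q *: NP q.
Proof.
move=> /allP sok; rewrite /nu_sum mulr_sumr mulr_suml [RHS]big_mkcond /=.
apply: eq_big_seq => q qs.
rewrite -scalerAr -scalerAl (e_mul_nu_path He nu_peirce _ (sok q qs)).
case: (pend q == j); last by rewrite mul0r scaler0 andbF.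
by rewrite (nu_path_mul_e He) andbT; case: (q.1 == i); rewrite ?scaler0.
Qed.

Lemma ker_trivial_path s c x : uniq s -> all pok s -> nu_sum e nu s c = 0 ->
  (x, [::]) \in s -> c (x, [::]) = 0.
Proof.
move=> suniq sok s0 xs; have := block_nu_sum c x x sok; rewrite s0 mulr0 mul0r => /esym.
rewrite -big_filter (bigD1_seq (x, [::])) ?filter_uniq //=; last by rewrite mem_filter xs eqxx.
set r := \sum_(q <- _ | _) _ => cxr.
have rR : r \in R.
  rewrite /r big_seq_cond; apply: memv_suml => q /andP[+ qNx]; rewrite mem_filter.
  case/andP=> /andP[/eqP qx _] qs; apply/memvZ/nu_path_radv; first exact: (allP sok).
  by apply: contraNneq qNx; case: q qx {qs} => y t /= -> ->.
apply: (in_rad_scale_e He (i := x)).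
have -> : c (x, [::]) *: e x = - r by apply/eqP; rewrite -addr_eq0; apply/eqP; exact: cxr.
exact/in_radN/(radv_rad HB).
Qed.

Lemma ker_arrow s c a : uniq s -> all pok s -> nu_sum e nu s c = 0 ->
  (src a, [:: a]) \in s -> c (src a, [:: a]) = 0.
Proof.
move=> suniq sok s0 a_s.
pose c' b := if (src a, [:: b]) \in s then c (src a, [:: b]) else 0.
suff /(nuB_free_mod YP) : \sum_(b <- enum (arrows src tgt (src a) (tgt a))) c' b *: nu b \in W.
  by move=> /(_ a); rewrite /c' a_s inE !eqxx; apply.
have := block_nu_sum c (src a) (tgt a) sok.
rewrite s0 mulr0 mul0r (bigID (fun q => size q.2 == 1%N)) /=.
rewrite (sum_length1_paths _ _ _ suniq sok).
move=> /esym/eqP; rewrite addr_eq0 => /eqP /= S1E.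
rewrite [X in X \in W](_ : _ = \sum_(b <- enum (arrows src tgt (src a) (tgt a)) |
    (src a, [:: b]) \in s) c (src a, [:: b]) *: NP (src a, [:: b])).
  rewrite S1E memvN big_seq_cond; apply: memv_suml => q /andP[qs /andP[_ q1]].
  case: q qs q1 => x [|b [|b' t]] //= qs _.
    by rewrite (ker_trivial_path suniq sok s0 qs) scale0r mem0v.
  by apply/memvZ/nu_path_radv2 => //; apply: (allP sok).
rewrite [RHS]big_mkcond big_seq [RHS]big_seq; apply: eq_bigr => b.
rewrite mem_enum inE => /andP[/eqP srcb _]; rewrite /c'.
by case: ifP => _; rewrite ?scale0r // -srcb (nu_path_arrow He nu_peirce).
Qed.

Lemma nuB_presentation : is_presentation e src tgt nu.
Proof.
split.
- exact: nu_peirce.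
- by move=> v; have [s [c [_ sok ->]]] := path_comb_nu_sum (path_comb_all v); exists s, c.
- have [m Rm0] := radv_nilpotent; exists (maxn 2 m.+1).
  split=> [|[x p]]; first exact: leq_maxl.
  case/lastP: p => [|s a] pp; rewrite ?size_rcons geq_max => /andP[_ ms] //.
  have := nu_path_radv_exp pp; rewrite -(subnKC ms) expvD Rm0 prod0v memv0.
  by move/eqP.
move=> s c suniq sok s0 [x [|a [|? ?]]] ps //= _; first exact: ker_trivial_path ps.
have := allP sok _ ps; rewrite /path_ok /walk_ok /= /letter_src /= andbT => /eqP srca.
by move: ps; rewrite -srca; apply: ker_arrow.
Qed.

End Presentation.

Section WalkWeight.
Variables (k : fieldType) (n : nat) (Arr : finType) (src tgt : Arr -> 'I_n) (lam : Arr -> k).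

Definition walk_weight (w : walk n Arr) : k :=
  \sum_(l <- w.2) (if l.2 then lam l.1 else - lam l.1).

Lemma walk_weight_cat w1 w2 : walk_weight (wcat w1 w2) = walk_weight w1 + walk_weight w2.
Proof. by rewrite /walk_weight big_cat. Qed.

Lemma walk_weight_inv w : walk_weight (winv src tgt w) = - walk_weight w.
Proof.
rewrite /walk_weight big_rev big_map -sumrN; apply: eq_bigr => -[a []] _ //=.
by rewrite opprK.
Qed.

Lemma walk_weight_path p : walk_weight (path_walk p) = \sum_(a <- p.2) lam a.
Proof. by rewrite /walk_weight big_map. Qed.

End WalkWeight.

Section EigenArrows.
Variables (k : fieldType) (A : falgType k) (n : nat) (e : 'I_n -> A).
Hypothesis He : complete_prim_orth e.
Variables (Arr : finType) (src tgt : Arr -> 'I_n) (nu : Arr -> A).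
Hypothesis nu_peirce : forall a, nu a = e (tgt a) * nu a * e (src a).
Variables (d : A -> A) (lam : Arr -> k).
Hypotheses (dder : der0 e d) (deigen : forall a, d (nu a) = lam a *: nu a).

Local Notation weight := (walk_weight lam).

(* A minimal relation is a linear relation between eigenvectors of [d]; its part
   of a single eigenvalue is again a relation, so it must be all of it. *)
Lemma minimal_relation_weight s t u v : minimal_relation e src tgt nu s t ->
  u \in s -> v \in s -> weight (path_walk u) = weight (path_walk v).
Proof.
move=> [_ _ _ st0 st_min] us vs; rewrite !walk_weight_path.
pose g (p : qpath n Arr) := \sum_(a <- p.2) lam a.
apply/eqP; apply: contraT => guv.
have gu0 := eigen_comb_split (der0_linear dder)
  (fun p _ => der0_nu_path dder deigen p) st0 (g u).
have := st_min [seq g p == g u | p <- s]; rewrite -filter_mask /nu_sum big_filter gu0 eqxx.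
apply.
  by apply/eqP => /(congr1 (fun r => u \in r)); rewrite mem_filter us eqxx.
rewrite size_filter -[X in (_ < X)%N](count_predC (fun p => g p == g u)) -addn1 leq_add2l.
by rewrite -has_count; apply/hasP; exists v => //=; rewrite eq_sym.
Qed.

Lemma walk_rel_weight w w' : walk_rel e src tgt nu w w' -> weight w = weight w'.
Proof.
elim=> {w w'}.
- by [].
- by move=> w w' _ ->.
- by move=> w1 w2 w3 _ -> _ ->.
- by move=> a [] /=; rewrite /walk_weight /= big_cons big_seq1 big_nil /= ?subrr ?addNr.
- move=> x pre w w' post _ ww' _ _ _ _; rewrite /walk_weight in ww'.
  by rewrite /walk_weight /= !big_cat /= ww'.
- by move=> s t u v; apply: minimal_relation_weight.
Qed.

Lemma in_im_theta_of_eigen x0 gamma d0 :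
  hh1_eq e d0 d -> in_im_theta e src tgt nu x0 gamma d0.
Proof.
move=> d0d; pose cE i := - weight (gamma i).
exists weight; split.
  by split=> [w w' _ _ /walk_rel_weight | w1 w2 _ _] //; apply: walk_weight_cat.
exists (fun a => d a + (ecomb e cE * a - a * ecomb e cE)); split.
- exact/der0D/(der0_inner He).
- move=> u uok; rewrite (der0_nu_path dder deigen) (ecomb_mul_nu_path He nu_peirce _ uok).
  rewrite (nu_path_mul_ecomb He nu_peirce _ uok) -scalerBl -scalerDl.
  rewrite !walk_weight_cat walk_weight_inv walk_weight_path /cE; congr (_ *: _); ring.
- exact: hh1_eq_add_inner.
Qed.

End EigenArrows.

Theorem proposition2p6 (k : closedFieldType) (A : falgType k) (n : nat)
    (e : 'I_n -> A) (Arr : finType) (src tgt : Arr -> 'I_n) :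
  complete_prim_orth e -> basic_alg e -> connected_alg A ->
  is_ordinary_quiver e src tgt -> acyclic_quiver src tgt ->
  forall (x0 : 'I_n) (T : {set Arr}) (gamma : 'I_n -> walk n Arr),
    is_max_tree src tgt T -> gamma_spec src tgt T x0 gamma ->
  forall D : (A -> A) -> Prop, (forall d, D d -> der0 e d) ->
    diagonalizable_HH1 e D <->
    exists nu : Arr -> A, is_presentation e src tgt nu /\
      forall d, D d -> in_im_theta e src tgt nu x0 gamma d.
Proof.
move=> He _ _ Hq _ x0 T gamma _ _ D _; split; last first.
  move=> [nu [nu_pres Dtheta]]; exact: (diagonalizable_of_presentation He nu_pres Dtheta).
move=> [B [HB Ddiag]].
have [Y YP] : exists Y, forall i j, is_arrow_basis e src tgt B i j (Y i j).
  have Yi i : exists Yi, forall j, is_arrow_basis e src tgt B i j (Yi j).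
    exact: fin_all_exists (exists_arrow_basis He Hq HB i).
  exact: fin_all_exists Yi.
exists (nuB src tgt Y); split; first exact: (nuB_presentation (k := k) He HB YP).
move=> d /Ddiag[d' [d'der d'diag dd']].
have d'nu a : exists c, d' (nuB src tgt Y a) = c *: nuB src tgt Y a.
  exact/d'diag/(nuB_in_B YP).
have [lam d'lam] := fin_all_exists d'nu.
exact: (in_im_theta_of_eigen (k := k) He (nuB_peirce YP) d'der d'lam x0 gamma dd').
Qed.
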